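(* Let $p\neq 2$ be a prime and $G=Z_{p^{\lambda_1}}\times\cdots\times Z_{p^{\lambda_n}}$ with $0<\lambda_1<\cdots<\lambda_n$. For a canonical tuple $\mathbf a$, the subgroup $R(\mathbf a)$ is a join-irreducible element of $\mathrm{Char}(G)$ if and only if $\mathbf a$ has precisely one nondegenerate coordinate.
   Context: $\mathrm{Char}(G)$ is the lattice of characteristic subgroups of $G$; an element of a finite lattice is join-irreducible if it is not the bottom element and is not the join of two elements each strictly below it. Set $\lambda_0=0$ and $a_0=0$. Tuples are ordered componentwise; for $\mathbf 0\le\mathbf a\le(\lambda_1,\dots,\lambda_n)$, $T(\mathbf a)$ is the set of $(g_1,\dots,g_n)\in G$ with $|g_i|=p^{a_i}$, and $R(\mathbf a)=\bigcup_{\mathbf b\le\mathbf a}T(\mathbf b)$. $\mathbf a$ is canonical if (I) $a_i\ge a_{i-1}$ for $i\in\{2,\dots,n\}$ and (II) $a_{i+1}-a_i\le\lambda_{i+1}-\lambda_i$ for $i\in\{1,\dots,n-1\}$; then $R(\mathbf a)$ is characteristic. A canonical $\mathbf a$ is degenerate at coordinate $i$ if $a_i=a_{i-1}$, or ($i\le n-1$ and) $a_{i+1}-a_i=\lambda_{i+1}-\lambda_i$; otherwise $i$ is nondegenerate. *)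

From HB Require Import structures.
From mathcomp Require Import all_boot all_order all_algebra all_fingroup all_solvable.

Unset Implicit Arguments.
Unset Strict Implicit.
Unset Printing Implicit Defensive.

Import GRing.Theory.

(* Conventions: the exponents lambda_1 < ... < lambda_n and tuples a_1..a_n
   are given as functions nat -> nat, read at the 1-based indices 1..n;
   the values at index 0 are replaced by the convention lambda_0 = a_0 = 0
   through [ext0]; values at indices > n are never used. *)
Definition ext0 (f : nat -> nat) (i : nat) : nat := if i is 0 then 0 else f i.

(* Ambient finite abelian group: row vectors of length n over Z_N with
   N = p^lambda_n, under coordinatewise addition (its canonical additive
   finGroupType); coordinate i.+1 (1-based) of g is g ord0 i. *)
Notation amb p n lam := (matrix 'Z_(p ^ lam n) 1 n).

(* The standard generator of the i-th factor (i : 'I_n is the 0-based index of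
   coordinate i.+1): the element p^(lambda_n - lambda_{i+1}) in coordinate i,
   which has order p^lambda_{i+1} in Z_(p^lambda_n). *)
Definition gen_e (p n : nat) (lam : nat -> nat) (i : 'I_n) : amb p n lam :=
  \row_(j < n) (if j == i then (((p ^ (lam n - lam i.+1))%:R)%R : 'Z_(p ^ lam n))
                 else 0%R).

(* G = Z_{p^lambda_1} x ... x Z_{p^lambda_n}, realised as the (internal direct)
   product of the cyclic subgroups <gen_e i>, i.e. the subgroup they generate. *)
Definition Ggrp (p n : nat) (lam : nat -> nat) : {group amb p n lam} :=
  <<[set gen_e p n lam i | i : 'I_n]>>%G.

Definition zorder (N : nat) (x : 'Z_N) : nat := #[x]%g.

Definition Tset (p n : nat) (lam : nat -> nat) (b : nat -> nat) : {set amb p n lam} :=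
  [set g in Ggrp p n lam |
     [forall i : 'I_n, zorder _ (g ord0 i) == p ^ b i.+1]].

(* R(a) = union of T(b) over all tuples b with 0 <= b <= a (componentwise).
   Since the conditions on b are coordinatewise, "g lies in T(b) for some
   b <= a" is written as: for every coordinate i there is b_i <= a_i with
   |g_i| = p^(b_i). *)
Definition Rset (p n : nat) (lam : nat -> nat) (a : nat -> nat) : {set amb p n lam} :=
  [set g in Ggrp p n lam |
     [forall i : 'I_n, [exists b : 'I_(a i.+1).+1, zorder _ (g ord0 i) == p ^ b]]].

Definition tuple_le_lam (n : nat) (lam a : nat -> nat) : Prop :=
  forall i, 1 <= i <= n -> a i <= lam i.

Definition canonical_tuple (n : nat) (lam a : nat -> nat) : Prop :=
  (forall i, 2 <= i <= n -> ext0 a (i.-1) <= ext0 a i) /\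
  (forall i, 1 <= i <= n - 1 -> a i.+1 - a i <= lam i.+1 - lam i).

Definition degenerate (n : nat) (lam a : nat -> nat) (i : nat) : Prop :=
  ext0 a i = ext0 a i.-1 \/ (i <= n - 1 /\ a i.+1 - a i = lam i.+1 - lam i).

Definition nondegenerate (n : nat) (lam a : nat -> nat) (i : nat) : Prop :=
  ~ degenerate n lam a i.

Definition unique_nondegenerate (n : nat) (lam a : nat -> nat) : Prop :=
  exists i, (1 <= i <= n) /\ nondegenerate n lam a i /\
    forall j, 1 <= j <= n -> nondegenerate n lam a j -> j = i.

Local Open Scope group_scope.

Definition in_Char {gT : finGroupType} (G : {group gT}) (H : {set gT}) : Prop :=
  group_set H /\ H \char G.

Definition char_join_irreducible {gT : finGroupType} (G : {group gT})
    (H : {set gT}) : Prop :=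
  in_Char G H /\ H != 1%g /\
  ~ (exists K L : {group gT},
       [/\ K \char G, L \char G, K \proper H, L \proper H &
           forall M : {group gT}, M \char G -> K \subset M -> L \subset M ->
             H \subset M]).

(* Realise G inside (Z_(p^L))^n, L = lambda_n, as the vectors whose i-th
   coordinate is divisible by p^(L - lambda_i); then R(a) is the subgroup of
   vectors whose i-th coordinate is divisible by p^(L - a_i).  Conditions (I)
   and (II) guarantee that every automorphism preserves R(a), since it sends an
   element of order p^lambda_k supported at k to one of order at most
   p^lambda_k.  Lowering a nondegenerate coordinate i keeps a canonical, so
   R(a - e_i) is a characteristic subgroup properly inside R(a).  Two distinct
   nondegenerate coordinates i, j give R(a) = R(a - e_i) R(a - e_j), and if
   there is none then a = 0 and R(a) = 1.  If i is the only one, the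
   transvections g |-> g + c g_k e_m and, p being odd, the doubling of a
   coordinate show that a characteristic subgroup of R(a) not inside
   R(a - e_i) contains R(a); so every proper characteristic subgroup of R(a)
   lies in R(a - e_i), and R(a) is join-irreducible. *)

From Pilot Require Import Defs.
From mathcomp Require Import all_boot all_order all_algebra all_fingroup all_solvable.
From mathcomp Require Import zify.
From Stdlib Require Import Classical_Prop.

Set Implicit Arguments.
Unset Strict Implicit.
Unset Printing Implicit Defensive.

Import GRing.Theory FinRing.Theory.

(* mathcomp's sesquilinear forms also define [degenerate] and [nondegenerate]. *)
Local Notation degenerate := Defs.degenerate.
Local Notation nondegenerate := Defs.nondegenerate.

Lemma leq_sub_split m n p : m - p <= (m - n) + (n - p).
Proof. lia. Qed.

(* Conditions (I) and (II), together with a <= lambda, in additive form. *)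
Definition canon_tuple (n : nat) (lam b : nat -> nat) :=
  [/\ forall i, 1 <= i < n -> b i <= b i.+1,
      forall i, 1 <= i < n -> b i.+1 + lam i <= b i + lam i.+1 &
      tuple_le_lam n lam b].

Lemma ext0_pos f j : 0 < j -> ext0 f j = f j. Proof. by case: j. Qed.

Lemma nat_ord_succ n i : 1 <= i <= n -> exists k : 'I_n, i = k.+1.
Proof. by case: i => // i i_n; exists (Ordinal i_n). Qed.

Definition decr_at (b : nat -> nat) (i j : nat) := if j == i then (b j).-1 else b j.

Section Degeneracy.
Variables (n : nat) (lam : nat -> nat).
Hypothesis lam_lt : forall i, 1 <= i < n -> lam i < lam i.+1.

Lemma lam_ltn i j : 1 <= i -> i < j <= n -> lam i < lam j.
Proof.
move=> i_gt0; elim: j => // j IHj /andP[lt_ij le_jn].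
have lam_j : lam j < lam j.+1 by apply: lam_lt; lia.
case: (ltnP i j) => [lt_ij'|ge_ij]; last by have -> : i = j by lia.
by apply: ltn_trans lam_j; apply: IHj; lia.
Qed.

Lemma lam_leq i j : 1 <= i <= j -> j <= n -> lam i <= lam j.
Proof.
case/andP=> i_gt0; rewrite leq_eqVlt => /orP[/eqP -> //|lt_ij] j_n.
by apply/ltnW/lam_ltn; lia.
Qed.

Lemma lam_leq_n (k : 'I_n) : lam k.+1 <= lam n.
Proof. by apply: lam_leq => //=; rewrite ltn_ord. Qed.

Lemma canonical_tuple_canon b :
  tuple_le_lam n lam b -> canonical_tuple n lam b -> canon_tuple n lam b.
Proof.
move=> b_le [b_mono b_gap]; split=> // i /andP[i_gt0 lt_in].
  by have := b_mono i.+1; rewrite /ext0 /=; case: i i_gt0 lt_in => // i _ lt_in; apply; lia.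
have := b_mono i.+1; have := b_gap i; have := @lam_lt i; rewrite /ext0 /=.
by case: i i_gt0 lt_in => // i _ lt_in; lia.
Qed.

Section CanonTupleFacts.
Variable b : nat -> nat.
Hypothesis b_canon : canon_tuple n lam b.

Lemma canon_tuple_mono k m : 1 <= k <= m -> m <= n -> b k <= b m.
Proof.
case: b_canon => b_mono _ _; elim: m => [|m IHm] /andP[k_gt0]; first by lia.
rewrite leq_eqVlt => /orP[/eqP <- //|lt_km] le_mn.
by apply: leq_trans (b_mono m _); [apply: IHm|]; lia.
Qed.

Lemma canon_tuple_gap k m : 1 <= k <= m -> m <= n -> b m + lam k <= b k + lam m.
Proof.
case: b_canon => _ b_gap _; elim: m => [|m IHm] /andP[k_gt0]; first by lia.
rewrite leq_eqVlt => /orP[/eqP <- //|lt_km] le_mn.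
have := IHm ltac:(lia) ltac:(lia); have := b_gap m ltac:(lia); lia.
Qed.

End CanonTupleFacts.

Variable a : nat -> nat.

Lemma exists_step j : 1 <= j <= n -> 0 < a j -> exists2 i, 1 <= i <= j & ext0 a i.-1 < a i.
Proof.
elim: j => [|j IHj] // j_n a_j.
case: (ltnP (ext0 a j) (a j.+1)) => [lt_j|ge_j]; first by exists j.+1; rewrite ?leqnn.
case: j IHj j_n a_j ge_j => [|j] IHj j_n a_j; first by rewrite /ext0; lia.
rewrite ext0_pos // => ge_j; have [i i_j lt_i] := IHj ltac:(lia) ltac:(lia).
by exists i => //; lia.
Qed.

(* The last strict step of [a] is a nondegenerate coordinate. *)
Lemma exists_nondegenerate m : 1 <= m <= n -> 0 < a m ->
  exists i, 1 <= i <= n /\ nondegenerate n lam a i.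
Proof.
move=> m_n a_m; pose step i := (1 <= i <= n) && (ext0 a i.-1 < a i).
have ex_step : exists i, step i.
  by have [i i_m lt_i] := exists_step m_n a_m; exists i; rewrite /step lt_i; lia.
have step_n i : step i -> i <= n by rewrite /step => /andP[/andP[]].
have [i /andP[i_n lt_i] max_i] := ex_maxnP ex_step step_n.
exists i; split=> //; case=> [E|[i_lt E]]; first by move: lt_i; rewrite -E ext0_pos; lia.
have step_i1 : step i.+1.
  rewrite /step /= ext0_pos; last by lia.
  by apply/andP; split; [lia | have := @lam_lt i ltac:(lia); lia].
by have := max_i _ step_i1; lia.
Qed.

Hypothesis a_canon : canon_tuple n lam a.

Let a_mono i : 1 <= i < n -> a i <= a i.+1. Proof. by case: a_canon => mono _ _; apply: mono. Qed.
Let a_gap i : 1 <= i < n -> a i.+1 + lam i <= a i + lam i.+1.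
Proof. by case: a_canon => _ gap _; apply: gap. Qed.

Lemma nondegenerate_lt_prev k : 1 <= k <= n -> nondegenerate n lam a k -> ext0 a k.-1 < a k.
Proof.
move=> k_n nd_k; rewrite ltn_neqAle; apply/andP; split.
  by apply/eqP => eq_k; apply: nd_k; left; rewrite ext0_pos; lia.
by case: k k_n {nd_k} => [|[|k]] //= k_n; apply: a_mono; lia.
Qed.

Lemma nondegenerate_gt0 k : 1 <= k <= n -> nondegenerate n lam a k -> 0 < a k.
Proof. by move=> k_n /(nondegenerate_lt_prev k_n); lia. Qed.

Lemma nondegenerate_gap_lt k : 1 <= k < n -> nondegenerate n lam a k ->
  a k.+1 + lam k < a k + lam k.+1.
Proof.
move=> k_n nd_k; have := a_gap k_n; rewrite leq_eqVlt => /orP[/eqP eq_gap|//].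
by case: nd_k; right; have := a_mono k_n; have := lam_lt k_n; split; lia.
Qed.

Section UniqueNondegenerate.
Variable k : nat.
Hypothesis k_n : 1 <= k <= n.
Hypothesis deg : forall j, 1 <= j <= n -> j <> k -> degenerate n lam a j.

(* Above [k] every coordinate repeats its predecessor: a gap equality at [j]
   would, since [a (j+1) = a j], force [lam (j+1) = lam j]. *)
Lemma eq_prev_above j : k < j <= n -> a j = a j.-1.
Proof.
move: {2}(n - j) (erefl (n - j)) => t; elim: t j => [|t IHt] j t_j j_n.
  case: (deg (j := j) ltac:(lia) ltac:(lia)) => [E|]; last by lia.
  by rewrite !ext0_pos in E; lia.
case: (deg (j := j) ltac:(lia) ltac:(lia)) => [E|[_ E]]; first by rewrite !ext0_pos in E; lia.
by have := IHt j.+1 ltac:(lia) ltac:(lia); have := @lam_lt j; simpl; lia.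
Qed.

Lemma const_above m : k <= m <= n -> a m = a k.
Proof.
elim: m => [|m IHm] m_n; first by lia.
case: (ltngtP k m.+1) => [lt_km|//|<- //]; last by lia.
by rewrite eq_prev_above /=; [apply: IHm|]; lia.
Qed.

(* Below [k] a repetition [a j = a (j-1)] is impossible once [a j > 0], since
   the gap equality at [j-1] would force [lam (j-1) = lam j]. *)
Lemma gap_eq_below j : 1 <= j < k -> 0 < a j -> a j.+1 + lam j = a j + lam j.+1.
Proof.
elim: j => [|j IHj] // j_k a_j.
case: (deg (j := j.+1) ltac:(lia) ltac:(lia)) => [E|[_ E]].
  move: E; rewrite ext0_pos //=; case: j IHj j_k a_j => [|j] IHj j_k a_j /= E; first by lia.
  by have := IHj ltac:(lia) ltac:(lia); have := @lam_lt j.+1; lia.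
by have := @lam_lt j.+1; have := @a_mono j.+1; lia.
Qed.

Lemma gap_eq_to j : 1 <= j <= k -> 0 < a j -> a k + lam j = a j + lam k.
Proof.
move: {2}(k - j) (erefl (k - j)) => t; elim: t j => [|t IHt] j t_j j_k a_j.
  by have -> : j = k by lia.
have a_j1 : 0 < a j.+1 by have := @a_mono j ltac:(lia); lia.
have := @gap_eq_below j ltac:(lia) a_j; have := @lam_lt j ltac:(lia).
by have := IHt j.+1 ltac:(lia) ltac:(lia) a_j1; lia.
Qed.

Lemma level_gap L m : 1 <= m <= n -> 0 < a m -> a k <= L ->
  L - a m = lam k - lam m + (L - a k).
Proof.
move=> m_n a_m le_akL; case: (leqP k m) => [le_km|lt_mk].
  have := const_above (m := m) ltac:(lia); have := @lam_leq k m ltac:(lia) ltac:(lia).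
  lia.
have := gap_eq_to (j := m) ltac:(lia) a_m; have := @lam_leq m k ltac:(lia) ltac:(lia).
lia.
Qed.

End UniqueNondegenerate.

Lemma decr_at_canon k : 1 <= k <= n -> nondegenerate n lam a k ->
  canon_tuple n lam (decr_at a k).
Proof.
move=> k_n nd_k; have [_ _ a_le] := a_canon.
have step_k i : 1 <= i -> i.+1 = k -> a i < a i.+1.
  by move=> i_gt0 ik; have := nondegenerate_lt_prev k_n nd_k; rewrite -ik /= ext0_pos.
have gap_k i : 1 <= i < n -> i = k -> a i.+1 + lam i < a i + lam i.+1.
  by move=> i_n ik; subst i; apply: nondegenerate_gap_lt.
rewrite /decr_at; split=> [i i_n|i i_n|j j_n].
- have := a_mono i_n; have := @step_k i.
  by case: (i =P k); case: (i.+1 =P k); lia.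
- have := a_mono i_n; have := a_gap i_n; have := lam_lt i_n; have := @step_k i; have := gap_k i i_n.
  by case: (i =P k); case: (i.+1 =P k); lia.
- by have := a_le j j_n; case: eqP; lia.
Qed.

End Degeneracy.

Section ZpDivisibility.
Local Open Scope ring_scope.
Variables p L : nat.
Hypothesis p_pr : prime p.
Hypothesis L_gt0 : (0 < L)%N.
Local Notation N := (p ^ L)%N.

Lemma pexp_gt1 : (1 < N)%N.
Proof. by rewrite -(expn0 p) ltn_exp2l ?prime_gt1. Qed.

Lemma natr_Zp_eq0 m : ((m%:R : 'Z_N) == 0) = (N %| m)%N.
Proof. by rewrite -val_eqE /= (val_Zp_nat pexp_gt1). Qed.

(* [pdvd e x]: the representative of [x] in [0, N) is divisible by p^e. *)
Definition pdvd e (x : 'Z_N) := (p ^ e %| x)%N.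

Lemma pdvd_natr e k : (e <= L)%N -> pdvd e k%:R = (p ^ e %| k)%N.
Proof.
by move=> le_eL; rewrite /pdvd (val_Zp_nat pexp_gt1) /dvdn (modn_dvdm k (dvdn_exp2l p le_eL)).
Qed.

Lemma pdvdP e x : (e <= L)%N -> reflect (exists q, x = (q * p ^ e)%:R) (pdvd e x).
Proof.
move=> le_eL; apply: (iffP idP) => [/dvdnP[q xq]|[q ->]].
  by exists q; rewrite -xq natr_Zp.
by rewrite pdvd_natr // dvdn_mull.
Qed.

Lemma pdvd0 e : pdvd e 0.
Proof. exact: dvdn0. Qed.

Lemma pdvdW e e' x : (e' <= e)%N -> pdvd e x -> pdvd e' x.
Proof. by move=> le_e'e; apply: dvdn_trans; rewrite dvdn_exp2l. Qed.

Lemma pdvdD e x y : (e <= L)%N -> pdvd e x -> pdvd e y -> pdvd e (x + y).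
Proof.
move=> le_eL /(pdvdP _ le_eL)[q ->] /(pdvdP _ le_eL)[r ->].
by rewrite -natrD -mulnDl pdvd_natr // dvdn_mull.
Qed.

Lemma pdvd_eq0 x : pdvd L x -> x = 0.
Proof. by move/(pdvdP _ (leqnn L)) => [q ->]; apply/eqP; rewrite natr_Zp_eq0 dvdn_mull. Qed.

Lemma pdvdMl e x z : (e <= L)%N -> pdvd e z -> pdvd e (x * z).
Proof.
move=> le_eL /(pdvdP _ le_eL)[q ->].
by rewrite -(natr_Zp x) -natrM pdvd_natr // mulnA dvdn_mull.
Qed.

Lemma pdvd_mulr_pexp e s t z : pdvd e z -> (t <= e + s)%N -> (t <= L)%N ->
  pdvd t (z * (p ^ s)%:R).
Proof.
move=> /dvdnP[q zq] le_t le_tL; rewrite -(natr_Zp z) zq -!natrM -mulnA -expnD.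
by rewrite pdvd_natr // dvdn_mull // dvdn_exp2l.
Qed.

Lemma mulrn_pexp_eq0 c (x : 'Z_N) : (x *+ p ^ c == 0) = pdvd (L - c) x.
Proof.
rewrite -{1}(natr_Zp x) -[_ *+ _]mulr_natr -natrM natr_Zp_eq0 /pdvd.
have p_gt0 : (0 < p ^ c)%N by rewrite expn_gt0 prime_gt0.
case: (leqP c L) => [le_cL|lt_Lc].
  by rewrite -{1}(subnK le_cL) expnD dvdn_pmul2r.
rewrite (_ : L - c = 0)%N ?expn0 ?dvd1n; last by lia.
by rewrite dvdn_mull // dvdn_exp2l // ltnW.
Qed.

Lemma zorder_pexp_leq c (x : 'Z_N) :
  [exists b : 'I_c.+1, zorder _ x == p ^ b]%N = pdvd (L - c) x.
Proof.
rewrite -mulrn_pexp_eq0 -order_dvdn /zorder; apply/existsP/idP => [[b /eqP ->]|].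
  by rewrite dvdn_exp2l // -ltnS.
by case/(dvdn_pfactor _ _ p_pr) => m le_mc ->; exists (Ordinal (le_mc : m < c.+1)%N).
Qed.

Lemma natr_Zp_unit k : ~~ (p %| k)%N -> (k%:R : 'Z_N) \is a GRing.unit.
Proof.
by move=> p_k; rewrite unitZpE ?pexp_gt1 // coprime_pexpl // prime_coprime.
Qed.

End ZpDivisibility.

Section Coordinates.
Local Open Scope ring_scope.
Variables (p n : nat) (lam : nat -> nat).
Hypothesis p_pr : prime p.
Hypothesis lam_lt : forall i, (1 <= i < n)%N -> (lam i < lam i.+1)%N.
Hypothesis lamn_gt0 : (0 < lam n)%N.

Local Notation L := (lam n).
Local Notation N := (p ^ lam n)%N.
Local Notation V := 'M['Z_N]_(1, n).
Local Notation G := (Ggrp p n lam).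
Local Notation pdvd := (@pdvd p L).

Lemma scale_delta_coord (k j : 'I_n) (x : 'Z_N) :
  (x *: delta_mx ord0 k : V) ord0 j = if j == k then x else 0.
Proof. by rewrite !mxE eqxx /=; case: eqP; rewrite ?mulr1 ?mulr0. Qed.

(* R(b) in coordinates: the i-th coordinate of Z_(p^lambda_i), embedded in
   Z_(p^L), is divisible by p^(L - b_i) exactly when its order divides p^(b_i). *)
Definition Rdvd (b : nat -> nat) : {set V} :=
  [set g : V | [forall k : 'I_n, pdvd (L - b k.+1) (g ord0 k)]].

Lemma Rdvd_group_set b : group_set (Rdvd b).
Proof.
apply/group_setP; split; first by rewrite inE; apply/forallP => k; rewrite mxE pdvd0.
move=> x y; rewrite !inE => /forallP x_b /forallP y_b; apply/forallP => k.
by rewrite zmodMgE mxE pdvdD ?leq_subr.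
Qed.

Canonical Rdvd_group b := Group (Rdvd_group_set b).

Lemma mem_Rdvd_delta b k x : (x *: delta_mx ord0 k \in Rdvd b) = pdvd (L - b k.+1) x.
Proof.
rewrite inE; apply/forallP/idP => [/(_ k)|x_b j]; first by rewrite scale_delta_coord eqxx.
by rewrite scale_delta_coord; case: eqP => [->|]; rewrite ?pdvd0.
Qed.

Lemma Rdvd_subG b (K : {group V}) :
  (forall (k : 'I_n) x, pdvd (L - b k.+1) x -> x *: delta_mx ord0 k \in K) -> Rdvd b \subset K.
Proof.
move=> deltaK; apply/subsetP => g; rewrite inE => /forallP g_b.
rewrite (row_sum_delta g); apply: (big_ind (fun x => x \in K)); first exact: group1.
  by move=> x y; apply: groupM.
by move=> k _; apply: deltaK.
Qed.

Lemma Ggrp_Rdvd : G = Rdvd lam :> {set V}.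
Proof.
apply/eqP; rewrite eqEsubset; apply/andP; split.
  rewrite gen_subG; apply/subsetP => _ /imsetP[k _ ->]; rewrite inE.
  apply/forallP => j; rewrite mxE; case: eqP => [->|]; last by rewrite pdvd0.
  by rewrite pdvd_natr ?leq_subr.
apply: Rdvd_subG => k x /(pdvdP p_pr lamn_gt0 _ (leq_subr _ _))[q ->].
have -> : (q * p ^ (L - lam k.+1))%:R *: delta_mx ord0 k = gen_e p n lam k *+ q.
  apply/matrixP => i j; rewrite (ord1 i) mulmxnE scale_delta_coord mxE.
  by case: eqP; rewrite ?mul0rn // natrM mulr_natl.
by rewrite -zmodXgE groupX // mem_gen // imset_f.
Qed.

Lemma Rdvd_subset_G b : tuple_le_lam n lam b -> Rdvd b \subset G.
Proof.
move=> b_le; rewrite Ggrp_Rdvd; apply/subsetP => g; rewrite !inE => /forallP g_b.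
apply/forallP => k; apply: pdvdW (g_b k).
by rewrite leq_sub2l // b_le /= ?ltn_ord.
Qed.

Lemma Rset_Rdvd b : tuple_le_lam n lam b -> Rset p n lam b = Rdvd b.
Proof.
move=> b_le; apply/setP => g; rewrite inE.
have -> : [forall i : 'I_n, [exists c : 'I_(b i.+1).+1, zorder N (g ord0 i) == (p ^ c)%N]]
    = (g \in Rdvd b).
  by rewrite inE; apply: eq_forallb => i; rewrite zorder_pexp_leq.
by apply/andb_idl/subsetP/Rdvd_subset_G.
Qed.

Lemma Rdvd_eq1 b : (forall k : 'I_n, b k.+1 = 0)%N -> Rdvd b = 1%g.
Proof.
move=> b0; apply/eqP; rewrite eqEsubset sub1G andbT; apply/subsetP => g.
rewrite !inE => /forallP g_b; apply/eqP/matrixP => i j; rewrite (ord1 i) [RHS]mxE.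
by apply: (pdvd_eq0 p_pr lamn_gt0); have := g_b j; rewrite b0 subn0.
Qed.

Section CanonTuple.
Variable b : nat -> nat.
Hypothesis b_canon : canon_tuple n lam b.

(* An automorphism sends [x e_k] to [y *+ p^s] with [s = lam_k - b_k], where
   [y] is the image of an element of order at most [p^lam_k]; coordinate [m]
   of [y] is then bounded through [lam_k] when [m >= k], using (I), and
   through [lam_m] when [m < k], using (II). *)
Lemma morph_delta_Rdvd (f : {morphism G >-> V}) (k : 'I_n) x :
  (f @* G)%g = G -> pdvd (L - b k.+1) x -> f (x *: delta_mx ord0 k) \in Rdvd b.
Proof.
move=> fG /(pdvdP p_pr lamn_gt0 _ (leq_subr _ _))[q ->].
have [_ _ b_le] := b_canon; have le_bk := b_le k.+1 (ltn_ord k).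
have le_lamk := lam_leq_n lam_lt k; set s := (lam k.+1 - b k.+1)%N.
set u : V := (q * p ^ (L - lam k.+1))%:R *: delta_mx ord0 k.
have uG : u \in G by rewrite Ggrp_Rdvd mem_Rdvd_delta pdvd_natr ?leq_subr ?dvdn_mull.
have -> : (q * p ^ (L - b k.+1))%:R *: delta_mx ord0 k = (u ^+ (p ^ s)%N)%g.
  rewrite zmodXgE /u scalerMnl -[_ *+ p ^ s]mulr_natr -natrM -mulnA -expnD.
  by congr ((_ * p ^ _)%:R *: _); lia.
rewrite morphX //; set y := f u.
have yG : y \in Rdvd lam by rewrite -Ggrp_Rdvd -fG mem_morphim.
have u_kill : (u ^+ (p ^ lam k.+1)%N)%g = 1%g.
  rewrite zmodXgE /u scalerMnl -[_ *+ _]mulr_natr -natrM -mulnA -expnD subnK //.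
  apply/matrixP => i j; rewrite !mxE (eqP (_ : (q * p ^ L)%:R == 0 :> 'Z_N)) ?mul0r //.
  by rewrite natr_Zp_eq0 // dvdn_mull.
have y_lamk m : pdvd (L - lam k.+1) (y ord0 m).
  by rewrite -mulrn_pexp_eq0 // -mulmxnE -zmodXgE /y -morphX // u_kill morph1 mxE.
rewrite inE; apply/forallP => m; rewrite zmodXgE mulmxnE -mulr_natr.
have le_lamm := lam_leq_n lam_lt m; have le_bm := b_le m.+1 (ltn_ord m).
case: (leqP k m) => [le_km|lt_mk].
  have := canon_tuple_mono b_canon (k := k.+1) (m := m.+1) ltac:(lia) (ltn_ord m).
  by move=> le_b; apply: pdvd_mulr_pexp (y_lamk m) _ _; lia.
have := canon_tuple_gap b_canon (k := m.+1) (m := k.+1) ltac:(lia) (ltn_ord k).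
move: yG; rewrite inE => /forallP/(_ m) y_lamm le_b.
by apply: pdvd_mulr_pexp y_lamm _ _; lia.
Qed.

Lemma Rdvd_char : (Rdvd b \char G)%g.
Proof.
have [_ _ b_le] := b_canon; have sRG := Rdvd_subset_G b_le.
apply/(@charP _ (Rdvd_group b)); split=> // f injf fG.
apply/eqP; rewrite eqEcard card_injm // leqnn andbT sub_morphim_pre //.
apply: (@Rdvd_subG b (f @*^-1 Rdvd_group b)%G) => k x x_b.
have xR : x *: delta_mx ord0 k \in Rdvd b by rewrite mem_Rdvd_delta.
by rewrite mem_morphpre ?(subsetP sRG) // morph_delta_Rdvd.
Qed.

End CanonTuple.

Definition transvection (k m : 'I_n) (c : 'Z_N) (g : V) : V :=
  g + (c * g ord0 k) *: delta_mx ord0 m.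

Lemma transvection_morphM k m c : {in G &, {morph transvection k m c : g h / (g * h)%g}}.
Proof.
by move=> g h _ _; rewrite /transvection !zmodMgE mxE mulrDr scalerDl addrACA.
Qed.

Lemma transvection_coord k m c g j :
  transvection k m c g ord0 j = g ord0 j + (if j == m then c * g ord0 k else 0).
Proof. by rewrite /transvection [LHS]mxE scale_delta_coord. Qed.

(* [g |-> g + c g_k e_m] is an automorphism of [G] when [c] maps the elements
   of order dividing [p^lam_k] to elements of order dividing [p^lam_m]; for
   [k = m] it rescales coordinate [k] by [1 + c], which must be a unit. *)
Lemma transvection_char_closed (K : {group V}) (k m : 'I_n) c :
  (K \char G)%g ->
  (forall x, pdvd (L - lam k.+1) x -> pdvd (L - lam m.+1) (c * x)) ->
  (k = m -> (1 + c) \is a GRing.unit) ->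
  {in K, forall h : V, (c * h ord0 k) *: delta_mx ord0 m \in K}.
Proof.
move=> charK c_lam c_unit h hK.
have sKG : K \subset G by case/andP: charK.
have fGG : {in G, forall g, transvection k m c g \in G}.
  move=> g; rewrite Ggrp_Rdvd !inE => /forallP g_lam; apply/forallP => j.
  rewrite transvection_coord.
  by case: eqP => [->|_]; rewrite ?addr0 // pdvdD ?leq_subr ?c_lam.
pose f := Morphism (@transvection_morphM k m c).
have injf : ('injm f)%g.
  apply/injmP => g g' _ _ /= fgg'.
  suff gg'_k : g ord0 k = g' ord0 k by move: fgg'; rewrite /transvection gg'_k => /addIr.
  move/(congr1 (fun v : V => v ord0 k)): fgg'; rewrite !transvection_coord.
  case: (k =P m) => [km|_]; last by rewrite !addr0.
  by rewrite -[X in X + _]mul1r -[X in _ = X + _]mul1r -!mulrDl => /(mulrI (c_unit km)).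
have fG : (f @* G)%g = G.
  apply/eqP; rewrite eqEcard card_injm // leqnn andbT.
  by apply/subsetP => _ /morphimP[g _ gG ->]; apply: fGG.
have fhK : f h \in K.
  by rewrite -((charP _ _ charK).2 f injf fG) mem_morphim // (subsetP sKG).
have := groupM fhK (groupVr hK).
by rewrite /= /transvection zmodVgE zmodMgE addrAC subrr add0r.
Qed.

Lemma char_closed_delta (K : {group V}) (k m : 'I_n) c x :
  (K \char G)%g -> x *: delta_mx ord0 k \in K ->
  (forall z, pdvd (L - lam k.+1) z -> pdvd (L - lam m.+1) (c * z)) ->
  (c * x) *: delta_mx ord0 m \in K.
Proof.
move=> charK xK c_lam; case: (k =P m) => [<-|k_neq_m].
  by rewrite -scalerA -(natr_Zp c) scaler_nat -zmodXgE groupX.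
have := transvection_char_closed charK c_lam (fun km => False_ind _ (k_neq_m km)) xK.
by rewrite scale_delta_coord eqxx.
Qed.

Hypothesis two_unit : (2%:R : 'Z_N) \is a GRing.unit.

Lemma char_closed_coord (K : {group V}) (k : 'I_n) g :
  (K \char G)%g -> g \in K -> g ord0 k *: delta_mx ord0 k \in K.
Proof.
move=> charK gK; have id_lam z : pdvd (L - lam k.+1) z -> pdvd (L - lam k.+1) (1 * z).
  by rewrite mul1r.
by have := transvection_char_closed charK id_lam (fun _ => two_unit) gK; rewrite mul1r.
Qed.

Lemma Rdvd_decr_at_sub b i : Rdvd (decr_at b i) \subset Rdvd b.
Proof.
apply/subsetP => g; rewrite !inE => /forallP g_b; apply/forallP => k.
by apply: pdvdW (g_b k); rewrite /decr_at; case: eqP; lia.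
Qed.

Lemma Rdvd_decr_at_join b (i j : 'I_n) (M : {group V}) : i != j ->
  Rdvd (decr_at b i.+1) \subset M -> Rdvd (decr_at b j.+1) \subset M -> Rdvd b \subset M.
Proof.
move=> i_neq_j sRiM sRjM; apply/subsetP => g; rewrite inE => /forallP g_b.
rewrite -[g](subrK (g ord0 i *: delta_mx ord0 i)); apply: groupM.
  apply/(subsetP sRiM); rewrite inE; apply/forallP => k; rewrite 2!mxE scale_delta_coord.
  rewrite /decr_at eqSS; case: (k =P i) => [->|k_neq_i]; first by rewrite !eqxx subrr pdvd0.
  have k_i_nat : (k == i :> nat) = false by apply/eqP => /val_inj.
  by rewrite k_i_nat subr0 g_b.
have i_j_nat : (i == j :> nat) = false := negbTE i_neq_j.
by apply: (subsetP sRjM); rewrite mem_Rdvd_delta /decr_at eqSS i_j_nat g_b.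
Qed.

Variable a : nat -> nat.
Hypothesis a_canon : canon_tuple n lam a.

Lemma Rdvd_decr_at_proper (k : 'I_n) : (0 < a k.+1)%N ->
  Rdvd (decr_at a k.+1) \proper Rdvd a.
Proof.
move=> a_gt0; have [_ _ a_le] := a_canon; have le_ak := a_le k.+1 (ltn_ord k).
have le_lamk := lam_leq_n lam_lt k; rewrite properE Rdvd_decr_at_sub /=.
apply/subsetPn; exists ((p ^ (L - a k.+1))%:R *: delta_mx ord0 k).
  by rewrite mem_Rdvd_delta pdvd_natr ?leq_subr.
rewrite mem_Rdvd_delta /decr_at eqxx pdvd_natr ?leq_subr // dvdn_Pexp2l ?prime_gt1 //.
lia.
Qed.

(* Starting from [g] in [K] but not in [R(a - e_k)], the coordinate [x = g_k]
   has exact level [a_k]; every element of level [a_m] at coordinate [m] is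
   then [c x] for a [c] respecting the levels, because the unique
   nondegenerate coordinate pins down [a] on both sides of [k]. *)
Lemma Rdvd_sub_char (k : 'I_n) (K : {group V}) :
  (forall j, (1 <= j <= n)%N -> j <> k.+1 -> degenerate n lam a j) ->
  (K \char G)%g -> K \subset Rdvd a -> ~~ (K \subset Rdvd (decr_at a k.+1)) ->
  Rdvd a \subset K.
Proof.
move=> deg charK sKR /subsetPn[g gK g_decr].
have [_ _ a_le] := a_canon.
have le_ak_L := leq_trans (a_le k.+1 (ltn_ord k)) (lam_leq_n lam_lt k).
have := subsetP sKR g gK; rewrite inE => /forallP g_a.
have xK := char_closed_coord k charK gK.
have [q x_q p_q] : exists2 q, g ord0 k = (q * p ^ (L - a k.+1))%:R & ~~ (p %| q)%N.
  have [q x_q] := pdvdP p_pr lamn_gt0 _ (leq_subr _ _) (g_a k); exists q => //.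
  apply: contra g_decr => /dvdnP[r q_r]; rewrite inE; apply/forallP => j.
  rewrite /decr_at eqSS; case: (j =P k) => [->|j_neq_k]; last first.
    by rewrite (_ : (j == k :> nat) = false) ?g_a //; apply/eqP => /val_inj.
  rewrite eqxx x_q q_r pdvd_natr ?leq_subr // -mulnA -expnS.
  by rewrite dvdn_mull // dvdn_exp2l //; lia.
have q_unit := natr_Zp_unit p_pr lamn_gt0 p_q.
apply: Rdvd_subG => m y y_a.
case: (posnP (a m.+1)) => [am0|am_gt0].
  by move: y_a; rewrite am0 subn0 => /(pdvd_eq0 p_pr lamn_gt0) ->; rewrite scale0r group1.
have [s y_s] := pdvdP p_pr lamn_gt0 _ (leq_subr _ _) y_a.
have e_am := level_gap lam_lt a_canon (k := k.+1) (ltn_ord k) deg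
  (m := m.+1) (ltn_ord m) am_gt0 le_ak_L.
set c : 'Z_N := s%:R / q%:R * (p ^ (lam k.+1 - lam m.+1))%:R.
have c_x : c * g ord0 k = y.
  by rewrite y_s x_q /c [(q * _)%:R]natrM mulrACA divrK // -!natrM -expnD e_am.
have c_lam z : pdvd (L - lam k.+1) z -> pdvd (L - lam m.+1) (c * z).
  move=> z_k; rewrite mulrAC.
  apply: (pdvd_mulr_pexp p_pr lamn_gt0 _ (leq_sub_split _ _ _) (leq_subr _ _)).
  by apply: pdvdMl; rewrite ?leq_subr.
by have := char_closed_delta charK xK c_lam; rewrite c_x.
Qed.

Lemma Rdvd_join_irreducible (k : 'I_n) : nondegenerate n lam a k.+1 ->
  (forall j, (1 <= j <= n)%N -> nondegenerate n lam a j -> j = k.+1) ->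
  char_join_irreducible G (Rdvd a).
Proof.
move=> nd_k uniq_k.
have deg j : (1 <= j <= n)%N -> j <> k.+1 -> degenerate n lam a j.
  by move=> j_n j_neq_k; apply: NNPP => nd_j; apply/j_neq_k/uniq_k.
have ak_gt0 := nondegenerate_gt0 a_canon (k := k.+1) (ltn_ord k) nd_k.
have proper_decr := Rdvd_decr_at_proper ak_gt0.
have char_decr : (Rdvd (decr_at a k.+1) \char G)%g.
  exact/Rdvd_char/(decr_at_canon lam_lt a_canon (k := k.+1) (ltn_ord k) nd_k).
split; [split; [exact: Rdvd_group_set | exact: Rdvd_char] | split].
  by apply: contraTneq proper_decr => ->; rewrite properE sub1G andbF.
case=> K [K' [charK charK' pK pK' join]].
have below (H : {group V}) : (H \char G)%g -> H \proper Rdvd a ->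
    H \subset Rdvd (decr_at a k.+1).
  move=> charH pH; apply: contraTT (pH) => nH.
  by rewrite properE (Rdvd_sub_char deg charH (proper_sub pH) nH) andbF.
have := join _ char_decr (below _ charK pK) (below _ charK' pK').
by apply/negP; move: proper_decr; rewrite properE => /andP[].
Qed.

Lemma unique_nondegenerate_of_irreducible :
  char_join_irreducible G (Rdvd a) -> unique_nondegenerate n lam a.
Proof.
case=> _ [R_neq1 R_irr].
have [m m_n am_gt0] : exists2 m, (1 <= m <= n)%N & (0 < a m)%N.
  apply: NNPP => a0; case/eqP: R_neq1; apply: Rdvd_eq1 => k.
  by case: (posnP (a k.+1)) => // ak; case: a0; exists k.+1; rewrite ?ltn_ord.
have [i [i_n nd_i]] := exists_nondegenerate lam_lt m_n am_gt0.
exists i; do 2!split=> //; move=> j j_n nd_j; apply: NNPP => j_neq_i; apply: R_irr.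
have [ki eq_i] := nat_ord_succ i_n; have [kj eq_j] := nat_ord_succ j_n; subst i j.
exists (Rdvd_group (decr_at a ki.+1)), (Rdvd_group (decr_at a kj.+1)); split.
- exact/Rdvd_char/(decr_at_canon lam_lt a_canon (k := ki.+1) (ltn_ord ki) nd_i).
- exact/Rdvd_char/(decr_at_canon lam_lt a_canon (k := kj.+1) (ltn_ord kj) nd_j).
- exact/Rdvd_decr_at_proper/(nondegenerate_gt0 a_canon (k := ki.+1) (ltn_ord ki) nd_i).
- exact/Rdvd_decr_at_proper/(nondegenerate_gt0 a_canon (k := kj.+1) (ltn_ord kj) nd_j).
- by move=> M _; apply: Rdvd_decr_at_join; apply: contra_not_neq j_neq_i => ->.
Qed.

End Coordinates.

Lemma Rset_rank0 p lam a : Rset p 0 lam a = 1%g.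
Proof.
apply/setP => g; rewrite (thinmx0 g) !inE (_ : 0%R = 1%g :> amb p 0 lam) //.
by rewrite group1 eqxx; apply/forallP => -[].
Qed.

Theorem mainTheorem15 (p n : nat) (lam a : nat -> nat) :
  prime p -> p != 2 ->
  0 < lam 1 ->
  (forall i, 1 <= i < n -> lam i < lam i.+1) ->
  tuple_le_lam n lam a ->
  canonical_tuple n lam a ->
  char_join_irreducible (Ggrp p n lam) (Rset p n lam a) <->
  unique_nondegenerate n lam a.
Proof.
move=> p_pr p_neq2 lam1_gt0 lam_lt a_le a_tuple.
case: (posnP n) => [n0|n_gt0].
  subst n; split; last by case=> i [] /andP[i_gt0 /(leq_trans i_gt0)].
  by case=> _ []; rewrite Rset_rank0 eqxx.
have lamn_gt0 : 0 < lam n by apply: leq_trans lam1_gt0 (lam_leq lam_lt _ _); lia.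
have a_canon := canonical_tuple_canon lam_lt a_le a_tuple.
have two_unit : (2%:R : 'Z_(p ^ lam n))%R \is a GRing.unit.
  by apply: natr_Zp_unit; rewrite // dvdn_prime2.
rewrite Rset_Rdvd //; split; first exact: unique_nondegenerate_of_irreducible.
case=> i [i_n [nd_i uniq_i]]; have [k eq_i] := nat_ord_succ i_n; subst i.
exact: (Rdvd_join_irreducible p_pr lam_lt lamn_gt0 two_unit a_canon nd_i uniq_i).
Qed.
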